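(* Let $A$ and $B$ be nonzero integers, let $g=\gcd(A,B)$, and write $A=ga$, $B=gb$ (so $\gcd(a,b)=1$). For an integer $L\ge 2$, let $\ell=\prod_{p\nmid g}p^{\nu_p(L)}$ and $\gamma(L)=\max_{p\mid g}\left\lceil \nu_p(L)/\nu_p(g)\right\rceil$ (with $\gamma(L)=0$ if $g=1$). Then the following are equivalent: (1) $L\in G_{(A,B)}$; (2) there exists a positive integer $\kappa\ge \gamma(L)$ with $\ell\mid(a^{\kappa}+b^{\kappa})$; (3) $\ell\in G_{(a,b)}$.
   Context: For nonzero integers $x,y$, $G_{(x,y)}$ denotes the set of positive integers $n$ for which there exists a positive integer $k$ with $n\mid(x^k+y^k)$ (''good integers'' with respect to $x$ and $y$). For a prime $p$ and a nonzero integer $n$, $\nu_p(n)$ is the $p$-adic valuation (exponent of $p$ in $n$). Products and maxima indexed by $p$ range over primes. $\lceil x\rceil$ is the least integer $\ge x$. *)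

From HB Require Import structures.
From mathcomp Require Import all_boot all_order all_algebra.
Set Implicit Arguments. Unset Strict Implicit. Unset Printing Implicit Defensive.
Import Order.TTheory GRing.Theory Num.Theory.
Local Open Scope ring_scope.

Definition good (x y : int) (n : nat) : Prop :=
  (0 < n)%N /\ exists2 k : nat, (0 < k)%N & (n%:Z %| x ^+ k + y ^+ k)%Z.

Definition ceil_div (m d : nat) : nat := ((m + d.-1) %/ d)%N.

(* ell = prod_{p prime, p \nmid g} p^{nu_p(L)}  (primes with nu_p(L)>0 are <= L) *)
Definition ell_part (g L : nat) : nat :=
  (\prod_(p < L.+1 | prime p && ~~ (p %| g)) p ^ logn p L)%N.

(* gamma(L) = max_{p | g} ceil(nu_p(L)/nu_p(g)), 0 if g = 1
   (primes dividing g are <= g). *)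
Definition gamma_part (g L : nat) : nat :=
  (\max_(p < g.+1 | prime p && (p %| g)) ceil_div (logn p L) (logn p g))%N.

From HB Require Import structures.
From mathcomp Require Import all_boot all_order all_algebra.
From mathcomp Require Import zify ring.
Set Implicit Arguments. Unset Strict Implicit. Unset Printing Implicit Defensive.
Import Order.TTheory GRing.Theory Num.Theory.
Local Open Scope ring_scope.

(* Writing A = g a and B = g b gives A^k + B^k = g^k (a^k + b^k).  The part
   l of L prime to g is coprime to g^k, so L | A^k + B^k forces
   l | a^k + b^k; conversely the g-part of L divides g^k as soon as
   k >= gamma(L), by the choice of gamma.  Finally the exponent can always be
   made large: d | a^k + b^k implies d | a^(km) + b^(km) for odd m, because
   u + v | u^m + v^m. *)

Lemma dvdz_addX_odd (u v : int) (m : nat) :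
  odd m -> (u + v %| u ^+ m + v ^+ m)%Z.
Proof.
move=> m_odd; have -> : u ^+ m + v ^+ m = u ^+ m - (- v) ^+ m.
  by rewrite exprNn -signr_odd m_odd expr1 mulN1r opprK.
by rewrite subrXX opprK dvdz_mulr.
Qed.

Lemma dvdz_addXM_odd (d u v : int) (k m : nat) :
  odd m -> (d %| u ^+ k + v ^+ k)%Z -> (d %| u ^+ (k * m) + v ^+ (k * m))%Z.
Proof.
by move=> m_odd /dvdz_trans; apply; rewrite !exprM dvdz_addX_odd.
Qed.

Lemma good_exponent_ge (x y : int) (n m : nat) : (0 < n)%N ->
  good x y n <->
  exists2 k : nat, (0 < k)%N /\ (m <= k)%N & (n%:Z %| x ^+ k + y ^+ k)%Z.
Proof.
move=> n_gt0; split=> [[_ [k k_gt0 dvd_n]] | [k [k_gt0 _] dvd_n]]; last first.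
  by split; last exists k.
exists (k * (2 * m).+1)%N; last by rewrite dvdz_addXM_odd //= oddM.
by split; [rewrite muln_gt0 k_gt0 | nia].
Qed.

Lemma addX_mul (R : comPzRingType) (x y c : R) (k : nat) :
  (x * c) ^+ k + (y * c) ^+ k = c ^+ k * (x ^+ k + y ^+ k).
Proof. by rewrite !exprMn; ring. Qed.

Lemma leq_ceil_divLR (m d k : nat) :
  (0 < d)%N -> (ceil_div m d <= k)%N = (m <= k * d)%N.
Proof.
by move=> d_gt0; rewrite /ceil_div -ltnS ltn_divLR //; lia.
Qed.

Section GoodIntegers.

Variables (g L : nat).
Hypotheses (g_gt0 : (0 < g)%N) (L_gt0 : (0 < L)%N).

Lemma ell_partE : ell_part g L = (L`_(\pi(g))^')%N.
Proof.
rewrite /ell_part /partn big_mkord [LHS]big_mkcond [RHS]big_mkcond.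
apply: eq_bigr => p _ /=; rewrite !inE mem_primes g_gt0 /=.
by case: (boolP (prime p)) => //= p_nprime; rewrite lognE (negPf p_nprime).
Qed.

Lemma coprime_ell_part : coprime (ell_part g L) g.
Proof.
by rewrite ell_partE (pnat_coprime (part_pnat _ _)) // pnatNK pnat_pi.
Qed.

Lemma logn_le_gamma_part (p : nat) : prime p -> (p %| g)%N ->
  (logn p L <= gamma_part g L * logn p g)%N.
Proof.
move=> p_pr p_dvd_g; rewrite -leq_ceil_divLR; last first.
  by rewrite logn_gt0 mem_primes p_pr g_gt0.
have p_lt : (p < g.+1)%N by rewrite ltnS dvdn_leq.
by apply: (bigop.bigmax_sup (Ordinal p_lt)); rewrite //= p_pr p_dvd_g.
Qed.

Lemma partn_pi_dvdn_expn (k : nat) :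
  (gamma_part g L <= k)%N -> (L`_\pi(g) %| g ^ k)%N.
Proof.
move=> gamma_le_k; apply/(dvdn_partP _ (part_gt0 _ _)) => p p_pi.
have := pnatPpi (part_pnat _ L) p_pi; rewrite inE mem_primes => /and3P[p_pr _ p_dvd_g].
rewrite p_part pfactor_dvdn ?expn_gt0 ?g_gt0 // lognX.
apply: leq_trans (dvdn_leq_log p L_gt0 (dvdn_part _ _)) _.
apply: leq_trans (logn_le_gamma_part p_pr p_dvd_g) _.
by rewrite leq_mul2r gamma_le_k orbT.
Qed.

Lemma good_ell_part_mulr (a b : int) :
  good (a * g%:Z) (b * g%:Z) L -> good a b (ell_part g L).
Proof.
case=> _ [k k_gt0]; rewrite addX_mul => dvd_L.
split; first by rewrite ell_partE part_gt0.
exists k => //; rewrite -(@Gauss_dvdzr _ (g%:Z ^+ k)); last first.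
  by rewrite coprimezE abszX /= coprimeXr ?coprime_ell_part.
by apply: dvdz_trans dvd_L; rewrite dvdzE /= ell_partE dvdn_part.
Qed.

Lemma good_mulr_gamma_part (a b : int) (k : nat) :
  (0 < k)%N -> (gamma_part g L <= k)%N ->
  (ell_part g L %| a ^+ k + b ^+ k)%Z -> good (a * g%:Z) (b * g%:Z) L.
Proof.
move=> k_gt0 gamma_le_k dvd_l; split=> //; exists k => //.
rewrite addX_mul -(partnC (\pi(g))^' L_gt0) partnNK -ell_partE PoszM mulrC.
by rewrite dvdz_mul // dvdzE abszX partn_pi_dvdn_expn.
Qed.

End GoodIntegers.

Theorem theorem3p4 (A B : int) (L : nat) (hA : A != 0) (hB : B != 0)
    (hL : (2 <= L)%N) :
  let g : nat := gcdn `|A|%N `|B|%N in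
  let a : int := (A %/ g%:Z)%Z in
  let b : int := (B %/ g%:Z)%Z in
  let l : nat := ell_part g L in
  (good A B L <->
     exists2 kappa : nat, (0 < kappa)%N /\ (gamma_part g L <= kappa)%N &
       ((l%:Z %| a ^+ kappa + b ^+ kappa)%Z)) /\
  ((exists2 kappa : nat, (0 < kappa)%N /\ (gamma_part g L <= kappa)%N &
       ((l%:Z %| a ^+ kappa + b ^+ kappa)%Z)) <-> good a b l).
Proof.
move=> g a b l.
have g_gt0 : (0 < g)%N by rewrite gcdn_gt0 absz_gt0 hA.
have L_gt0 : (0 < L)%N by apply: leq_trans hL.
have A_eq : A = a * g%:Z by rewrite divzK // dvdzE /= dvdn_gcdl.
have B_eq : B = b * g%:Z by rewrite divzK // dvdzE /= dvdn_gcdr.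
have l_gt0 : (0 < l)%N by rewrite /l ell_partE ?part_gt0.
have good_ab_l := good_exponent_ge a b (gamma_part g L) l_gt0.
rewrite -good_ab_l A_eq B_eq; split=> //; split; first exact: good_ell_part_mulr.
by move/good_ab_l=> [k [k_gt0 gamma_le_k]]; apply: good_mulr_gamma_part.
Qed.
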